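(* Let $\mathscr C$ be a directed cycle with node set $\{1,\dots,l\}$, each node $i$ carrying an integer label ${\rm label}(i)$ (different nodes may share a label). For a node $a$ of $\mathscr C$, let $a^-$ denote its predecessor in $\mathscr C$ (the unique node with an edge $a^-\to a$). Consider a random process $(i_k,j_k)_{k\ge1}$ of pairs of nodes of $\mathscr C$, with history $W_k=(i_\tau,j_\tau)_{\tau=1}^k$, such that for some $\gamma>0$ and all $k$: if ${\rm label}(i_k)\ne{\rm label}(j_k)$, then $(i_{k+1},j_{k+1})\in\{i_k,i_k^-\}\times\{j_k,j_k^-\}$ almost surely and $\mathbb P((i_{k+1},j_{k+1})=(i_k,j_k^-)\mid W_k)\ge\gamma$, $\mathbb P((i_{k+1},j_{k+1})=(i_k^-,j_k)\mid W_k)\ge\gamma$, $\mathbb P((i_{k+1},j_{k+1})\in\{(i_k,j_k),(i_k^-,j_k^-)\}\mid W_k)\ge\gamma$; if ${\rm label}(i_k)={\rm label}(j_k)$, then $\mathbb P((i_{k+1},j_{k+1})=(i_k,j_k)\mid W_k)=1$. Then there exist an integer $k^*>0$ and numbers $\mu_k\in(0,1)$ such that for every initial pair $(i_1,j_1)$, $\mathbb P({\rm label}(i_{k+1})={\rm label}(j_{k+1})\mid i_1,j_1)\ge\mu_k$ for all $k\ge k^*$. *)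

From HB Require Import structures.
From mathcomp Require Import all_boot all_order all_algebra.
From mathcomp Require Import all_classical all_reals all_analysis.
Set Implicit Arguments. Unset Strict Implicit. Unset Printing Implicit Defensive.
Import Order.TTheory GRing.Theory Num.Theory.
Local Open Scope classical_set_scope.

(* A directed cycle on the node set 'I_l, given by its predecessor map
   [pr] (the edges are  pr a -> a):  pr is a bijection with a single orbit. *)
Definition directed_cycle (l : nat) (pr : 'I_l -> 'I_l) : Prop :=
  injective pr /\ (forall a b : 'I_l, fconnect pr a b).

(* The event  {W_k = W_k(w0)} : the history (i_t, j_t), 1 <= t <= k,
   coincides with that of the outcome w0. *)
Definition hist_event (T : Type) (l : nat) (i j : nat -> T -> 'I_l)
    (k : nat) (w0 : T) : set T :=
  [set w | forall t, (1 <= t <= k)%N -> i t w = i t w0 /\ j t w = j t w0].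

Definition pair_event (T : Type) (l : nat) (i j : nat -> T -> 'I_l)
    (k : nat) (a b : 'I_l) : set T :=
  [set w | i k w = a /\ j k w = b].

(* Let c = min(gamma, 1/2).  While the labels of i_k and j_k differ, with
   conditional probability at least c only i_k moves, to its predecessor,
   which shortens the predecessor-distance from i_k to j_k by one; once the
   labels agree the pair is frozen.  Hence, conditioning on the history, the
   event "the labels agree or j_k is at most n predecessor steps from i_k"
   keeps at least a fraction c of its mass when n decreases by one and k
   increases by one.  Starting from the distance N < l between i_1 and j_1,
   after k >= l steps the labels agree with probability at least c^k. *)

From HB Require Import structures.
From mathcomp Require Import all_boot all_order all_algebra.
From mathcomp Require Import all_classical all_reals all_analysis.
Import Order.TTheory GRing.Theory Num.Theory.
Local Open Scope classical_set_scope.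
Local Open Scope ring_scope.

Set Implicit Arguments.
Unset Strict Implicit.
Unset Printing Implicit Defensive.

Lemma fconnect_iter_lt (T : finType) (f : T -> T) (x y : T) :
  fconnect f x y -> exists2 n, (n < #|T|)%N & iter n f x = y.
Proof.
move=> xy; exists (findex f x y); last exact: iter_findex.
exact: leq_trans (findex_max xy) (max_card _).
Qed.

Section FinitePartition.
Variables (d : measure_display) (T : measurableType d) (R : realType).
Variables (mu : {measure set T -> \bar R}) (H : finType) (f : T -> H).
Hypothesis measurable_fiber : forall h, measurable (f @^-1` [set h]).

Definition saturated (X : set T) := forall w0, X w0 -> f @^-1` [set f w0] `<=` X.

Lemma saturatedI (X Y : set T) : saturated X -> saturated Y -> saturated (X `&` Y).
Proof. by move=> satX satY w0 [Xw0 Yw0] w fw; split; [apply: satX fw | apply: satY fw]. Qed.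

Lemma partition_fiber (Z : set T) : Z = \big[setU/set0]_(h : H) (Z `&` f @^-1` [set h]).
Proof.
rewrite -big_enum -bigcup_seq; apply/seteqP; split=> [w Zw|w [h _ []]] //.
by exists (f w); rewrite //= mem_enum.
Qed.

Lemma measurable_saturated (X : set T) : saturated X -> measurable X.
Proof.
move=> satX; rewrite (partition_fiber X); apply: bigsetU_measurable => h _.
have [->|/set0P[w0 [Xw0 <-]]] := eqVneq (X `&` f @^-1` [set h]) set0.
  exact: measurable0.
by rewrite setIidr //; apply: satX.
Qed.

Lemma measure_partition_fiber (Z : set T) : measurable Z ->
  mu Z = (\sum_(h : H) mu (Z `&` f @^-1` [set h]))%E.
Proof.
move=> mZ; rewrite {1}(partition_fiber Z) [in LHS]big_enum_val [in RHS]big_enum_val /=.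
rewrite measure_bigsetU_ord => [//|m|m1 m2 _ _ [w [[_ e1] [_ e2]]]].
- exact: measurableI.
- by apply: enum_val_inj; rewrite -e1 -e2.
Qed.

(* The tower property for the finite sigma-algebra generated by [f]: a lower
   bound on the conditional measure of [Y] given each fiber inside [X]
   carries over to [X]. *)
Lemma saturated_measure_ge (X Y : set T) (c : R) : 0 <= c ->
  saturated X -> measurable Y ->
  (forall w0, X w0 ->
    c%:E * mu (f @^-1` [set f w0]) <= mu (f @^-1` [set f w0] `&` Y))%E ->
  (c%:E * mu X <= mu (X `&` Y))%E.
Proof.
move=> c0 satX mY cond; have mX := measurable_saturated satX.
rewrite measure_partition_fiber // (measure_partition_fiber (measurableI _ _ mX mY)).
rewrite ge0_sume_distrr => [|h _]; last exact: measure_ge0.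
apply: lee_sum => h _; rewrite setIAC.
have [->|/set0P[w0 [Xw0 <-]]] := eqVneq (X `&` f @^-1` [set h]) set0.
  by rewrite set0I measure0 mule0.
by rewrite setIidr; [exact: cond | exact: satX].
Qed.

End FinitePartition.

Section History.
Variables (d : measure_display) (T : measurableType d) (l : nat) (i j : nat -> T -> 'I_l).
Hypotheses (i_meas : forall k (a : 'I_l), measurable (i k @^-1` [set a]))
           (j_meas : forall k (a : 'I_l), measurable (j k @^-1` [set a])).

Definition hist k w : {ffun 'I_k -> 'I_l * 'I_l} := [ffun t : 'I_k => (i t.+1 w, j t.+1 w)].

Lemma hist_eventP k w0 w : hist_event i j k w0 w <-> hist k w = hist k w0.
Proof.
split=> [hw|/ffunP hw t /andP[t_gt0 tk]].
  by apply/ffunP => t; rewrite !ffunE; have [-> ->] := hw t.+1 (ltn_ord t).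
have tk' : (t.-1 < k)%N by rewrite prednK.
by have := hw (Ordinal tk'); rewrite !ffunE /= prednK // => -[-> ->].
Qed.

Lemma hist_eventE k w0 : hist_event i j k w0 = hist k @^-1` [set hist k w0].
Proof. by apply/seteqP; split=> w /hist_eventP. Qed.

Lemma measurable_hist_fiber k h : measurable (hist k @^-1` [set h]).
Proof.
have -> : hist k @^-1` [set h] =
    \big[setI/setT]_(t : 'I_k) (i t.+1 @^-1` [set (h t).1] `&` j t.+1 @^-1` [set (h t).2]).
  rewrite -big_enum -bigcap_seq; apply/seteqP; split=> w; rewrite /preimage /=.
    by move=> <- t _; rewrite ffunE.
  move=> hw; apply/ffunP => t; rewrite ffunE; have [-> ->] := hw t (mem_enum _ t).
  by case: (h t).
by apply: bigsetI_measurable => t _; apply: measurableI.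
Qed.

Lemma measurable_pair_event k a b : measurable (pair_event i j k a b).
Proof. exact: (measurableI _ _ (i_meas k a) (j_meas k b)). Qed.

Lemma saturated_hist_at k t (A : 'I_l -> 'I_l -> Prop) : (1 <= t <= k)%N ->
  saturated (hist k) [set w | A (i t w) (j t w)].
Proof. by move=> tk w0 Aw0 w /hist_eventP /(_ t tk) [ei ej]; rewrite /= ei ej. Qed.

Lemma saturated_hist_mono k k' (X : set T) : (k <= k')%N ->
  saturated (hist k) X -> saturated (hist k') X.
Proof.
move=> kk' satX w0 Xw0 w /hist_eventP hw; apply: (satX w0 Xw0); apply/hist_eventP.
by move=> t /andP[t_gt0 tk]; apply: hw; rewrite t_gt0 (leq_trans tk kk').
Qed.

End History.

Section Merging.
Variables (d : measure_display) (T : measurableType d) (R : realType).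
Variables (mu : {measure set T -> \bar R}) (l : nat) (pr : 'I_l -> 'I_l).
Variables (label : 'I_l -> int) (i j : nat -> T -> 'I_l) (c : R).
Hypotheses (i_meas : forall k (a : 'I_l), measurable (i k @^-1` [set a]))
           (j_meas : forall k (a : 'I_l), measurable (j k @^-1` [set a])).
Hypotheses (c_ge0 : 0 <= c) (c_le1 : c <= 1).
Hypothesis stay : forall k w0, (1 <= k)%N -> label (i k w0) = label (j k w0) ->
  (mu (hist_event i j k w0)
    <= mu (hist_event i j k w0 `&` pair_event i j k.+1 (i k w0) (j k w0)))%E.
Hypothesis approach : forall k w0, (1 <= k)%N -> label (i k w0) != label (j k w0) ->
  (c%:E * mu (hist_event i j k w0)
    <= mu (hist_event i j k w0 `&` pair_event i j k.+1 (pr (i k w0)) (j k w0)))%E.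

Definition close n (a b : 'I_l) := label a = label b \/ exists2 t, (t <= n)%N & iter t pr a = b.

Definition close_event n k : set T := [set w | close n (i k w) (j k w)].

Lemma close0 a b : close 0 a b -> label a = label b.
Proof. by case=> [//|[t]]; rewrite leqn0 => /eqP -> /= ->. Qed.

Lemma close_pred n a b : close n.+1 a b -> label a != label b -> close n (pr a) b.
Proof.
case=> [-> /eqP //|[[|t] tn ab] lab]; first by move: lab; rewrite -ab eqxx.
by right; exists t; rewrite // -iterSr.
Qed.

Lemma close_step k n (X : set T) : (1 <= k)%N -> saturated (hist i j k) X ->
  (c%:E * mu (X `&` close_event n.+1 k) <= mu (X `&` close_event n k.+1))%E.
Proof.
move=> k_gt0 satX.
have satA : saturated (hist i j k) (X `&` close_event n.+1 k).
  by apply: saturatedI => //; apply: saturated_hist_at; rewrite k_gt0 leqnn.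
have satZ : saturated (hist i j k.+1) (X `&` close_event n k.+1).
  apply: saturatedI; first exact: saturated_hist_mono (leqnSn k) satX.
  by apply: saturated_hist_at; rewrite /= leqnn.
have mfib := measurable_hist_fiber i_meas j_meas.
have mZ := measurable_saturated (mfib k.+1) satZ.
apply: le_trans _ (measureIr mu (measurable_saturated (mfib k) satA) mZ).
apply: (saturated_measure_ge (mfib k) c_ge0 satA mZ) => w0 [Xw0 closew0].
rewrite -hist_eventE.
have le_close a b : close n a b -> (mu (hist_event i j k w0 `&` pair_event i j k.+1 a b)
    <= mu (hist_event i j k w0 `&` (X `&` close_event n k.+1)))%E.
  move=> ab; apply: le_measure; rewrite ?inE.
  - apply: measurableI; last exact: (measurable_pair_event i_meas j_meas).
    by rewrite hist_eventE; apply: mfib.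
  - by apply: measurableI => //; rewrite hist_eventE; apply: mfib.
  - move=> w [hw [ei ej]]; split=> //; split; last by rewrite /close_event /= ei ej.
    by apply: (satX w0 Xw0); apply/hist_eventP.
have [eq_ab|neq_ab] := eqVneq (label (i k w0)) (label (j k w0)).
  apply: le_trans (gee_pMl _ (measure_ge0 _ _) _) _; rewrite ?lee_fin //.
  by apply: le_trans (stay k_gt0 eq_ab) (le_close _ _ (or_introl eq_ab)).
by apply: le_trans (approach k_gt0 neq_ab) (le_close _ _ (close_pred closew0 neq_ab)).
Qed.

Lemma close_iter (X : set T) n m : saturated (hist i j 1) X ->
  ((c ^+ m)%:E * mu (X `&` close_event (n + m) 1) <= mu (X `&` close_event n m.+1))%E.
Proof.
move=> satX; elim: m n => [|m IH] n; first by rewrite expr0 mul1e addn0.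
rewrite exprS EFinM -muleA addnS -addSn.
apply: le_trans _ (@close_step m.+1 n X _ (saturated_hist_mono _ satX)) => //.
by apply: lee_wpmul2l; [rewrite lee_fin | exact: IH].
Qed.

Lemma label_agree_ge a b N k : iter N pr a = b -> (N <= k)%N ->
  ((c ^+ k)%:E * mu (pair_event i j 1 a b)
    <= mu (pair_event i j 1 a b `&` [set w | label (i k.+1 w) = label (j k.+1 w)]))%E.
Proof.
move=> ab Nk; set S := pair_event i j 1 a b.
have satS : saturated (hist i j 1) S by apply: (saturated_hist_at (A := fun x y => x = a /\ y = b)).
have S_close : S = S `&` close_event (0 + k) 1.
  by apply/esym/setIidl => w [ei ej]; right; exists N; rewrite // ei ej.
rewrite {1}S_close.
apply: le_trans (close_iter _ _ satS) _.
have mfib := measurable_hist_fiber i_meas j_meas.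
apply: le_measure; rewrite ?inE.
- apply: (measurable_saturated (mfib k.+1)); apply: saturatedI.
    exact: saturated_hist_mono satS.
  by apply: saturated_hist_at; rewrite /= leqnn.
- apply: measurableI; first exact: (measurable_pair_event i_meas j_meas).
  apply: (measurable_saturated (mfib k.+1)).
  by apply: (saturated_hist_at (A := fun x y => label x = label y)); rewrite /= leqnn.
- by move=> w [Sw closew]; split=> //; apply: close0.
Qed.

End Merging.

Theorem lemma5 (R : realType) (l : nat) (l_gt0 : (0 < l)%N)
  (pr : 'I_l -> 'I_l) (label : 'I_l -> int)
  (cyc : directed_cycle pr)
  (d : measure_display) (T : measurableType d) (P : probability T R)
  (i j : nat -> T -> 'I_l)
  (i_meas : forall k (a : 'I_l), measurable (i k @^-1` [set a]))
  (j_meas : forall k (a : 'I_l), measurable (j k @^-1` [set a]))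
  (gamma : R) (gamma_gt0 : 0 < gamma)
  (step_diff : forall (k : nat) (w0 : T), (1 <= k)%N ->
     label (i k w0) != label (j k w0) ->
     let H := hist_event i j k w0 in
     let a := i k w0 in let b := j k w0 in
     [/\ P (H `&` ~` [set w | (i k.+1 w == a) || (i k.+1 w == pr a)] ) = 0%E,
         P (H `&` ~` [set w | (j k.+1 w == b) || (j k.+1 w == pr b)] ) = 0%E,
         (gamma%:E * P H <= P (H `&` pair_event i j k.+1 a (pr b)))%E,
         (gamma%:E * P H <= P (H `&` pair_event i j k.+1 (pr a) b))%E &
         (gamma%:E * P H <= P (H `&` (pair_event i j k.+1 a b
                                       `|` pair_event i j k.+1 (pr a) (pr b))))%E])
  (step_same : forall (k : nat) (w0 : T), (1 <= k)%N ->
     label (i k w0) = label (j k w0) ->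
     let H := hist_event i j k w0 in
     P (H `&` pair_event i j k.+1 (i k w0) (j k w0)) = P H) :
  exists (kstar : nat) (mu : nat -> R),
    (0 < kstar)%N /\ (forall k, 0 < mu k < 1) /\
    forall (k : nat) (a b : 'I_l), (kstar <= k)%N ->
      (0 < P (pair_event i j 1 a b))%E ->
      ((mu k)%:E * P (pair_event i j 1 a b)
        <= P (pair_event i j 1 a b
               `&` [set w | label (i k.+1 w) = label (j k.+1 w)]))%E.
Proof.
pose c := Order.min gamma 2^-1.
have c_gt0 : 0 < c by rewrite lt_min gamma_gt0 invr_gt0 ltr0n.
have c_le_gamma : c <= gamma by rewrite ge_min lexx.
have c_lt1 : c < 1 by rewrite gt_min invf_lt1 ?ltr1n ?orbT.
exists l, (fun k => c ^+ k.+1); split=> //; split=> [k|k a b lk _].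
  by rewrite exprn_gt0 //= exprn_ilt1 ?ltW.
have [N Nl ab] := fconnect_iter_lt (cyc.2 a b); rewrite card_ord in Nl.
have stay k' w0 : (1 <= k')%N -> label (i k' w0) = label (j k' w0) ->
    (P (hist_event i j k' w0)
      <= P (hist_event i j k' w0 `&` pair_event i j k'.+1 (i k' w0) (j k' w0)))%E.
  by move=> k'_gt0 e; rewrite (step_same k' w0 k'_gt0 e).
have approach k' w0 : (1 <= k')%N -> label (i k' w0) != label (j k' w0) ->
    (c%:E * P (hist_event i j k' w0)
      <= P (hist_event i j k' w0 `&` pair_event i j k'.+1 (pr (i k' w0)) (j k' w0)))%E.
  move=> k'_gt0 ne; have [_ _ _ + _] := step_diff k' w0 k'_gt0 ne; apply: le_trans.
  by apply: lee_wpmul2r; rewrite ?lee_fin.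
apply: le_trans _ (label_agree_ge i_meas j_meas (ltW c_gt0) (ltW c_lt1) stay approach ab
  (ltnW (leq_trans Nl lk))).
by apply: lee_wpmul2r; rewrite // lee_fin ler_wiXn2l ?ltW.
Qed.
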